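(* Let $p=3$, $a\in\mathbb{C}_3$, $a\ne0$, $A=|a|_3$, $f(x)=\frac{ax}{x^2+a}$, and $t_1=\sqrt{-2a}$, $t_2=-\sqrt{-2a}$. Let $0<r<\sqrt A$. Then: (a) for every $x\in S_r(t_1)\setminus\mathcal P_2$, $\lim_{n\to\infty}f^{2n}(x)=t_1$ and $\lim_{n\to\infty}f^{2n+1}(x)=t_2$; (b) for every $x\in S_r(t_2)\setminus\mathcal P_2$, $\lim_{n\to\infty}f^{2n}(x)=t_2$ and $\lim_{n\to\infty}f^{2n+1}(x)=t_1$.
   Context: $S_r(t)=\{x\in\mathbb{C}_3:|x-t|_3=r\}$. $\mathcal P_2=\{x\in\mathbb{C}_p:\exists n\in\mathbb{N},\ f^n(x)\in\{\pm\sqrt{-a},\ \pm\sqrt{(-3\pm\sqrt5)a/2}\}\}$ (the points whose orbit reaches a singularity of $f$ or $f\circ f$). The points $t_1,t_2$ form a $2$-cycle of $f$. *)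

From Stdlib Require Import Reals.
From mathcomp Require Import all_boot all_order all_algebra.
Set Implicit Arguments. Unset Strict Implicit. Unset Printing Implicit Defensive.
Import GRing.Theory.
Local Open Scope ring_scope.

(* (F, abs) is a model of C_3: an algebraically closed field with a
   non-archimedean absolute value abs : F -> R, normalized by |3| = 1/3,
   and complete with respect to abs. *)
Definition is_C3_like (F : closedFieldType) (abs : F -> R) : Prop :=
  (forall x : F, Rle R0 (abs x)) /\
  (forall x : F, abs x = R0 <-> x = 0) /\
  (forall x y : F, abs (x * y) = Rmult (abs x) (abs y)) /\
  (forall x y : F, Rle (abs (x + y)) (Rmax (abs x) (abs y))) /\
  abs (3%:R : F) = Rinv (INR 3) /\
  (forall u : nat -> F,
        (forall eps : R, Rlt R0 eps -> exists N : nat,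
            forall m n : nat, (N <= m)%N -> (N <= n)%N ->
              Rlt (abs (u m - u n)) eps) ->
        exists l : F, forall eps : R, Rlt R0 eps -> exists N : nat,
            forall n : nat, (N <= n)%N -> Rlt (abs (u n - l)) eps).

Definition converges_to (F : closedFieldType) (abs : F -> R)
    (u : nat -> F) (l : F) : Prop :=
  forall eps : R, Rlt R0 eps -> exists N : nat,
    forall n : nat, (N <= n)%N -> Rlt (abs (u n - l)) eps.

Definition fa (F : closedFieldType) (a : F) (x : F) : F :=
  a * x / (x ^+ 2 + a).

Definition sphere (F : closedFieldType) (abs : F -> R) (r : R) (t : F) : F -> Prop :=
  fun x => abs (x - t) = r.

(* singular points of f or f o f:
   {±sqrt(-a), ±sqrt((-3 ± sqrt 5) a / 2)} *)
Definition singular (F : closedFieldType) (a : F) (y : F) : Prop :=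
  y ^+ 2 = - a \/
  exists s : F, s ^+ 2 = 5%:R /\ 2%:R * y ^+ 2 = (- 3%:R + s) * a.

Definition P2 (F : closedFieldType) (a : F) (x : F) : Prop :=
  exists n : nat, singular a (iter n (fa a) x).

(* Write h = x - t. Since t^2 = -2a, f(x) + t = h (t h - 3a) / (x^2 + a) and
   x^2 + a = -a + h (h + 2t). On the ball |h| <= r < |t| = sqrt|a| the
   ultrametric inequality gives |x^2 + a| = |a| and
   |t h - 3a| <= max(|t| r, |a| / 3) = max(r / |t|, 1/3) |a|, so f maps the
   ball around t into the ball around -t (and vice versa), shrinking the
   distance by the factor max(1/3, r/|t|) < 1. In particular the orbit never
   reaches a pole. *)

From Stdlib Require Import Reals Lra.
From mathcomp Require Import all_boot all_order all_algebra.
From mathcomp Require Import ring.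
Set Implicit Arguments. Unset Strict Implicit.

Import GRing.Theory.
Local Open Scope ring_scope.
Delimit Scope R_scope with Re.

Section Ultrametric.

Variables (F : closedFieldType) (abs : F -> R).
Hypothesis hF : is_C3_like abs.

Lemma abs_ge0 x : (0 <= abs x)%Re.
Proof. by case: hF. Qed.

Lemma abs_eq0 x : abs x = 0%Re <-> x = 0.
Proof. by case: hF => _ []. Qed.

Lemma absM x y : abs (x * y) = (abs x * abs y)%Re.
Proof. by case: hF => _ [_ []]. Qed.

Lemma abs_ultra x y : (abs (x + y) <= Rmax (abs x) (abs y))%Re.
Proof. by case: hF => _ [_ [_ []]]. Qed.

Lemma abs3 : abs 3%:R = (/ 3)%Re.
Proof. by case: hF => _ [_ [_ [_ []]]] -> _; rewrite INR_IZR_INZ. Qed.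

Lemma abs_gt0 {x} : x != 0 -> (0 < abs x)%Re.
Proof.
move=> nx; case: (Rle_lt_or_eq_dec _ _ (abs_ge0 x)) => // /esym /abs_eq0 x0.
by rewrite x0 eqxx in nx.
Qed.

Lemma abs1 : abs 1 = 1%Re.
Proof.
have e := absM 1 1; rewrite mulr1 in e.
have := abs_gt0 (oner_neq0 F : (1 : F) != 0); nra.
Qed.

Lemma absN x : abs (- x) = abs x.
Proof.
have absN1 : abs (- 1) = 1%Re.
  have e := absM (- 1) (- 1); rewrite mulrNN mulr1 abs1 in e.
  have := abs_ge0 (- 1); nra.
by rewrite -mulN1r absM absN1 Rmult_1_l.
Qed.

Lemma abs_add_lt x y : (abs y < abs x)%Re -> abs (x + y) = abs x.
Proof.
move=> yx; have le := abs_ultra x y; have ge := abs_ultra (x + y) (- y).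
rewrite addrK absN in ge; move: le ge; rewrite /Rmax.
by do 2 case: Rle_dec => _; lra.
Qed.

(* [|2| = 1] since [1 = |3 - 2| <= max(|3|, |2|)] and [|3| < 1]. *)
Lemma abs2 : abs 2%:R = 1%Re.
Proof.
have le1 : (abs 2%:R <= 1)%Re.
  by have := abs_ultra 1 1; rewrite -mulr2n abs1 Rmax_left //; lra.
have ge1 : (1 <= Rmax (abs 3%:R) (abs 2%:R))%Re.
  by have := abs_ultra 3%:R (- 2%:R); rewrite -natrB // abs1 absN.
rewrite abs3 in ge1; move: ge1; rewrite /Rmax; case: Rle_dec => _; lra.
Qed.

Lemma abs_div x y : y != 0 -> abs (x / y) = (abs x / abs y)%Re.
Proof.
move=> ny; rewrite absM; congr Rmult.
have e := absM y^-1 y; rewrite mulVf // abs1 in e.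
have y0 := abs_gt0 ny.
by apply: (Rmult_eq_reg_r (abs y)); [rewrite -e Rinv_l //; lra | lra].
Qed.

Lemma abs_signr_mul k x : abs ((- 1) ^+ k * x) = abs x.
Proof. by elim: k => [|k IHk]; rewrite ?expr0 ?mul1r // exprS mulN1r mulNr absN. Qed.

End Ultrametric.

Section TwoCycle.

Variables (F : closedFieldType) (a t : F).
Hypothesis ht : t ^+ 2 = - (2%:R * a).

Lemma fa_denom_shift x : x ^+ 2 + a = - a + (x - t) * (x - t + 2%:R * t).
Proof.
have -> : x ^+ 2 + a = - a + (x - t) * (x - t + 2%:R * t) + (t ^+ 2 + 2%:R * a)
  by ring.
by rewrite ht addNr addr0.
Qed.

Lemma fa_add_cycle x : x ^+ 2 + a != 0 ->
  fa a x + t = (x - t) * (t * (x - t) - 3%:R * a) / (x ^+ 2 + a).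
Proof.
move=> nD; rewrite /fa.
have -> : a * x / (x ^+ 2 + a) + t = (a * x + t * (x ^+ 2 + a)) / (x ^+ 2 + a)
  by field.
congr (_ / _).
have -> : a * x + t * (x ^+ 2 + a) =
    (x - t) * (t * (x - t) - 3%:R * a) + (t ^+ 2 + 2%:R * a) * (2%:R * x - t)
  by ring.
by rewrite ht addNr mul0r addr0.
Qed.

End TwoCycle.

Definition contraction_ratio (r s : R) : R := Rmax (/ 3) (r / s).

Lemma contraction_ratio_bounds r s : (0 <= r)%Re -> (r < s)%Re ->
  (0 <= contraction_ratio r s < 1)%Re.
Proof.
move=> r0 rs; have s0 : (0 < s)%Re by lra.
have rs1 : (r / s < 1)%Re.
  by apply: (Rmult_lt_reg_r s) => //; rewrite /Rdiv Rmult_assoc Rinv_l; lra.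
split; first by apply: Rle_trans (Rmax_l _ _); lra.
by apply: Rmax_lub_lt; lra.
Qed.

Lemma converges_to_geometric (F : closedFieldType) (abs : F -> R)
    (u : nat -> F) (l : F) (c d : R) :
  (0 <= c < 1)%Re -> (forall n, (abs (u n - l)%R <= c ^ n * d)%Re) ->
  converges_to abs u l.
Proof.
move=> [c0 c1] hu eps eps0.
have dpos : (0 < Rabs d + 1)%Re by have := Rabs_pos d; lra.
have [N hN] : exists N, forall n,
    (n >= N)%coq_nat -> (Rabs (c ^ n) < eps / (Rabs d + 1))%Re.
  by apply: pow_lt_1_zero; [rewrite Rabs_pos_eq | apply: Rdiv_lt_0_compat].
exists N => n /leP nN; apply: Rle_lt_trans (hu n) _.
have cn0 : (0 <= c ^ n)%Re by apply: pow_le.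
have := hN n nN; rewrite Rabs_pos_eq // => cn.
have cn' : (c ^ n * (Rabs d + 1) < eps)%Re.
  move/(Rmult_lt_compat_r (Rabs d + 1)): cn.
  by rewrite /Rdiv Rmult_assoc Rinv_l; lra.
have := Rle_abs d; nra.
Qed.

Section Contraction.

Variables (F : closedFieldType) (abs : F -> R).
Hypothesis hF : is_C3_like abs.
Variables (a t : F) (r : R).
Hypothesis ht : t ^+ 2 = - (2%:R * a).
Hypotheses (hr0 : (0 <= r)%Re) (hrt : (r < abs t)%Re).

Lemma abs_cycle_sq : abs a = (abs t * abs t)%Re.
Proof.
by have := congr1 abs ht; rewrite expr2 absM // absN // absM // abs2 // Rmult_1_l.
Qed.

Lemma abs_fa_denom x : (abs (x - t) <= r)%Re -> abs (x ^+ 2 + a) = abs a.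
Proof.
move=> hx; rewrite (fa_denom_shift ht) abs_add_lt // absN //.
have h2t : (abs (x - t + 2%:R * t) <= abs t)%Re.
  by apply: Rle_trans (abs_ultra hF _ _) _; rewrite absM // abs2 // Rmult_1_l;
    apply: Rmax_lub; lra.
rewrite absM // abs_cycle_sq.
apply: Rle_lt_trans (Rmult_le_compat_l _ _ _ (abs_ge0 hF _) h2t) _.
by apply: Rmult_lt_compat_r; [lra | apply: Rle_lt_trans hx hrt].
Qed.

Lemma abs_fa_numer x : (abs (x - t) <= r)%Re ->
  (abs (t * (x - t) - 3%:R * a) <= contraction_ratio r (abs t) * abs a)%Re.
Proof.
move=> hx; have t0 : (0 < abs t)%Re by lra.
have a0 : (0 <= abs a)%Re by apply: abs_ge0.
apply: Rle_trans (abs_ultra hF _ _) _.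
rewrite absN // !absM // abs3 //; apply: Rmax_lub.
- have rc : (r <= contraction_ratio r (abs t) * abs t)%Re.
    have := Rmax_r (/ 3) (r / abs t); rewrite -/(contraction_ratio _ _).
    by move/(Rmult_le_compat_r (abs t)); rewrite /Rdiv Rmult_assoc Rinv_l;
      lra.
  rewrite abs_cycle_sq; have := abs_ge0 hF (x - t); nra.
- by apply: Rmult_le_compat_r => //; apply: Rmax_l.
Qed.

Lemma fa_contract x : (abs (x - t) <= r)%Re ->
  (abs (fa a x + t) <= contraction_ratio r (abs t) * abs (x - t))%Re.
Proof.
move=> hx; have hD := abs_fa_denom hx.
have a0 : (0 < abs a)%Re by rewrite abs_cycle_sq; apply: Rmult_lt_0_compat; lra.
have nD : x ^+ 2 + a != 0.
  by apply/eqP => /(abs_eq0 hF) D0; rewrite D0 in hD; lra.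
rewrite (fa_add_cycle ht nD) abs_div // absM // hD /Rdiv.
apply: Rle_trans (_ : (abs (x - t) * (contraction_ratio r (abs t) * abs a)
    * / abs a <= _)%Re).
  apply: Rmult_le_compat_r; first by apply/Rlt_le/Rinv_0_lt_compat.
  by apply: Rmult_le_compat_l; [apply: abs_ge0 | apply: abs_fa_numer].
by right; rewrite !Rmult_assoc Rinv_r; [rewrite Rmult_1_r Rmult_comm | lra].
Qed.

End Contraction.

Section Orbit.

Variables (F : closedFieldType) (abs : F -> R).
Hypothesis hF : is_C3_like abs.
Variables (a t : F) (r : R).
Hypothesis ht : t ^+ 2 = - (2%:R * a).
Hypotheses (hr0 : (0 <= r)%Re) (hrt : (r < abs t)%Re).
Variable x : F.
Hypothesis hx : (abs (x - t) <= r)%Re.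

Let c := contraction_ratio r (abs t).

Lemma iter_fa_geometric k :
  (abs (iter k (fa a) x - (- 1) ^+ k * t) <= c ^ k * abs (x - t))%Re.
Proof.
have [c0 c1] : (0 <= c < 1)%Re := contraction_ratio_bounds hr0 hrt.
elim: k => [|k IHk]; first by rewrite expr0 mul1r /= Rmult_1_l; apply: Rle_refl.
set s := (- 1) ^+ k * t in IHk *.
have hs : s ^+ 2 = - (2%:R * a) by rewrite exprMn sqrr_sign mul1r ht.
have st : abs s = abs t by apply: abs_signr_mul.
have ck1 : (c ^ k <= 1)%Re by rewrite -(pow1 k); apply: pow_incr; lra.
have sx : (abs (iter k (fa a) x - s) <= r)%Re.
  have := abs_ge0 hF (x - t); have := pow_le _ k c0; nra.
rewrite iterS exprS mulN1r mulNr opprK.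
apply: Rle_trans (fa_contract hF hs hr0 _ sx) _; first by rewrite st.
rewrite st /= Rmult_assoc; exact: Rmult_le_compat_l c0 IHk.
Qed.

Lemma fa_2cycle_attracts :
  converges_to abs (fun n => iter (2 * n) (fa a) x) t /\
  converges_to abs (fun n => iter (2 * n).+1 (fa a) x) (- t).
Proof.
have [c0 c1] : (0 <= c < 1)%Re := contraction_ratio_bounds hr0 hrt.
have c2 : (0 <= c ^ 2 < 1)%Re by split; [apply: pow_le | simpl; nra].
have even n : (- 1) ^+ (2 * n) = 1 :> F by rewrite mulnC exprM sqrr_sign.
split.
- apply: (converges_to_geometric (d := abs (x - t)) c2) => n.
  by rewrite -pow_mult multE; have := iter_fa_geometric (2 * n); rewrite even mul1r.
- apply: (converges_to_geometric (d := c * abs (x - t)) c2) => n.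
  rewrite -pow_mult multE -Rmult_assoc (Rmult_comm _ c).
  by have := iter_fa_geometric (2 * n).+1; rewrite exprS even mulr1 mulN1r.
Qed.

End Orbit.

Theorem theorem4p3 (F : closedFieldType) (abs : F -> R)
    (hF : is_C3_like abs) (a : F) (ha : a != 0)
    (t1 t2 : F) (ht1 : t1 ^+ 2 = - (2%:R * a)) (ht2 : t2 = - t1)
    (r : R) (hr0 : Rlt R0 r) (hr : Rlt r (sqrt (abs a))) :
  (forall x : F, sphere abs r t1 x -> ~ P2 a x ->
     converges_to abs (fun n => iter (2 * n) (fa a) x) t1 /\
     converges_to abs (fun n => iter (2 * n).+1 (fa a) x) t2) /\
  (forall x : F, sphere abs r t2 x -> ~ P2 a x ->
     converges_to abs (fun n => iter (2 * n) (fa a) x) t2 /\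
     converges_to abs (fun n => iter (2 * n).+1 (fa a) x) t1).
Proof.
have r0 : (0 <= r)%Re by lra.
have rt1 : (r < abs t1)%Re.
  by rewrite (abs_cycle_sq hF ht1) sqrt_square in hr; last exact: abs_ge0.
have ht2' : t2 ^+ 2 = - (2%:R * a) by rewrite ht2 sqrrN.
have rt2 : (r < abs t2)%Re by rewrite ht2 absN.
split=> x hx _.
- by have := fa_2cycle_attracts hF ht1 r0 rt1 (Req_le _ _ hx); rewrite ht2.
- have := fa_2cycle_attracts hF ht2' r0 rt2 (Req_le _ _ hx).
  by rewrite ht2 opprK.
Qed.
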